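(* Let $E$ be a directed graph and let the graph inverse semigroup $G(E)$ carry a Hausdorff topology $\tau$ making it a semitopological semigroup. The following are equivalent: (1) $(G(E),\tau)$ is compact; (2) it is countably compact; (3) it is feebly compact; (4) it is CLP-compact; (5) $(G(E),\tau)$ is topologically isomorphic to $(G(E),\tau_c)$.
   Context: All spaces are Hausdorff. A semitopological semigroup is a topological space with a separately continuous associative multiplication. A space is countably compact if every infinite subset has an accumulation point; feebly compact if every locally finite family of non-empty open sets is finite; CLP-compact if every cover by clopen sets has a finite subcover. A directed graph $E=(E^0,E^1,r,s)$ has vertices $E^0$, edges $E^1$, source/range maps $s,r:E^1\to E^0$; paths are vertices and sequences of edges $e_1\ldots e_n$ with $r(e_i)=s(e_{i+1})$. The graph inverse semigroup $G(E)$ is the semigroup with zero $0$ generated by $E^0$, $E^1$, $E^{-1}=\{e^{-1}\mid e\in E^1\}$ subject to: for $a,b\in E^0$, $e,f\in E^1$: $ab=a$ if $a=b$, else $0$; $s(e)e=er(e)=e$; $e^{-1}s(e)=r(e)e^{-1}=e^{-1}$; $e^{-1}f=r(e)$ if $e=f$, else $0$. The topology $\tau_c$ on $G(E)$: non-zero elements are isolated and the open neighborhoods of $0$ are the cofinite subsets containing $0$. *)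

From Stdlib Require Import List ClassicalEpsilon.
Import ListNotations.


Record graph := Graph {
  vert : Type;
  edge : Type;
  src : edge -> vert;
  rng : edge -> vert }.

(** A path is represented by its source vertex together with its (possibly
    empty) list of edges; the empty list gives the vertex (trivial path). *)
Definition path (E : graph) : Type := (vert E * list (edge E))%type.

Fixpoint chain (E : graph) (l : list (edge E)) : Prop :=
  match l with
  | e :: ((f :: _) as t) => rng E e = src E f /\ chain E t
  | _ => True
  end.

Definition valid_path (E : graph) (p : path E) : Prop :=
  match snd p with
  | [] => True
  | e :: _ => src E e = fst p /\ chain E (snd p)
  end.

Definition prange (E : graph) (p : path E) : vert E :=
  last (map (rng E) (snd p)) (fst p).

Definition pcat (E : graph) (p : path E) (q : list (edge E)) : path E :=
  (fst p, snd p ++ q).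

(** * The graph inverse semigroup G(E), in its standard normal form:
    0 (= None) and the elements u v^{-1} (= Some (u, v)) with u, v paths,
    r(u) = r(v). *)
Definition GE_valid (E : graph) (uv : path E * path E) : Prop :=
  valid_path E (fst uv) /\ valid_path E (snd uv) /\
  prange E (fst uv) = prange E (snd uv).

Definition GE (E : graph) : Type := option {uv : path E * path E | GE_valid E uv}.

Definition GE_zero (E : graph) : GE E := None.

Definition mkGE (E : graph) (u v : path E) : GE E :=
  match excluded_middle_informative (GE_valid E (u, v)) with
  | left H => Some (exist _ (u, v) H)
  | right _ => None
  end.

Definition GE_vert (E : graph) (v : vert E) : GE E := mkGE E (v, []) (v, []).
Definition GE_edge (E : graph) (e : edge E) : GE E :=
  mkGE E (src E e, [e]) (rng E e, []).
Definition GE_inv_edge (E : graph) (e : edge E) : GE E :=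
  mkGE E (rng E e, []) (src E e, [e]).

Definition pref (E : graph) (b c : path E) : option (list (edge E)) :=
  match excluded_middle_informative
          (exists q, fst c = fst b /\ snd c = snd b ++ q) with
  | left H => Some (proj1_sig (constructive_indefinite_description _ H))
  | right _ => None
  end.

(** (a b^{-1})(c d^{-1}) = (a q) d^{-1} if c = b q;
                         = a (d q)^{-1} if b = c q;
                         = 0 otherwise. *)
Definition GE_mul (E : graph) (x y : GE E) : GE E :=
  match x, y with
  | Some x', Some y' =>
      let a := fst (proj1_sig x') in let b := snd (proj1_sig x') in
      let c := fst (proj1_sig y') in let d := snd (proj1_sig y') in
      match pref E b c with
      | Some q => mkGE E (pcat E a q) d
      | None =>
          match pref E c b with
          | Some q => mkGE E a (pcat E d q)
          | None => None
          end
      end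
  | _, _ => None
  end.

Section Topology.
Variable X : Type.
Definition fam := (X -> Prop) -> Prop.

Definition is_topology (tau : fam) : Prop :=
  tau (fun _ => False) /\ tau (fun _ => True) /\
  (forall U V, tau U -> tau V -> tau (fun x => U x /\ V x)) /\
  (forall F : fam, (forall U, F U -> tau U) -> tau (fun x => exists U, F U /\ U x)).

Definition hausdorff (tau : fam) : Prop :=
  forall x y : X, x <> y ->
    exists U V, tau U /\ tau V /\ U x /\ V y /\ (forall z, ~ (U z /\ V z)).

Definition finite_set (A : X -> Prop) : Prop := exists l : list X, forall x, A x -> In x l.

Definition finite_fam (F : fam) : Prop :=
  exists l : list (X -> Prop), forall U, F U -> In U l.

Definition covers (F : fam) : Prop := forall x, exists U, F U /\ U x.

Definition compact (tau : fam) : Prop :=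
  forall F : fam, (forall U, F U -> tau U) -> covers F ->
    exists l : list (X -> Prop), (forall U, In U l -> F U) /\
      (forall x, exists U, In U l /\ U x).

Definition accumulation_point (tau : fam) (A : X -> Prop) (x : X) : Prop :=
  forall U, tau U -> U x -> exists y, A y /\ y <> x /\ U y.

Definition countably_compact (tau : fam) : Prop :=
  forall A : X -> Prop, ~ finite_set A -> exists x, accumulation_point tau A x.

Definition locally_finite (tau : fam) (F : fam) : Prop :=
  forall x, exists U, tau U /\ U x /\
    finite_fam (fun V => F V /\ exists y, U y /\ V y).

Definition feebly_compact (tau : fam) : Prop :=
  forall F : fam, (forall U, F U -> tau U /\ exists x, U x) ->
    locally_finite tau F -> finite_fam F.

Definition clopen (tau : fam) (U : X -> Prop) : Prop :=
  tau U /\ tau (fun x => ~ U x).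

Definition CLP_compact (tau : fam) : Prop :=
  forall F : fam, (forall U, F U -> clopen tau U) -> covers F ->
    exists l : list (X -> Prop), (forall U, In U l -> F U) /\
      (forall x, exists U, In U l /\ U x).
End Topology.

Definition continuous_map (X Y : Type) (tX : fam X) (tY : fam Y) (f : X -> Y) : Prop :=
  forall V, tY V -> tX (fun x => V (f x)).

Definition semitopological (S : Type) (mul : S -> S -> S) (tau : fam S) : Prop :=
  forall a, continuous_map S S tau tau (fun x => mul a x) /\
            continuous_map S S tau tau (fun x => mul x a).

(** The topology tau_c on G(E): non-zero elements isolated, neighbourhoods of 0
    are the cofinite sets containing 0. *)
Definition tau_c (E : graph) : fam (GE E) :=
  fun U => U (GE_zero E) -> finite_set (GE E) (fun x => ~ U x).

Definition top_iso (E : graph) (tau tau' : fam (GE E)) : Prop :=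
  exists (h g : GE E -> GE E),
    (forall x, g (h x) = x) /\ (forall y, h (g y) = y) /\
    (forall x y, h (GE_mul E x y) = GE_mul E (h x) (h y)) /\
    continuous_map (GE E) (GE E) tau tau' h /\ continuous_map (GE E) (GE E) tau' tau g.

(* In a Hausdorff semitopological graph inverse semigroup every non-zero
   element is isolated.  For a vertex v with an outgoing edge e, the sets
   where z ee^-1 and ee^-1 z are non-zero and differ from z are open (the
   first because {0} is closed, the second because the fixed points of a
   continuous map form a closed set), and they meet exactly in {v}; without
   outgoing edges v z and z v being non-zero already forces z = v.  A general
   element ab^-1 then has a finite open neighbourhood, the preimage of {r(a)}
   under z |-> a^-1 z b, which only contains elements cd^-1 with c a prefix
   of a and d a prefix of b.
   Once all points but 0 are isolated, each of the four compactness
   properties is equivalent to every neighbourhood of 0 being cofinite, and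
   that condition says precisely that the identity is a homeomorphism onto
   tau_c. *)
From Stdlib Require Import List ClassicalEpsilon Classical FunctionalExtensionality
  PropExtensionality ProofIrrelevance Lia.
Import ListNotations.

Fixpoint prefixes {A : Type} (l : list A) : list (list A) :=
  match l with
  | [] => [[]]
  | x :: l' => [] :: map (cons x) (prefixes l')
  end.

Lemma in_prefixes {A : Type} (s t : list A) : In s (prefixes (s ++ t)).
Proof.
  induction s as [|x s IH]; cbn.
  - destruct t; left; reflexivity.
  - right. apply in_map, IH.
Qed.

Lemma compact_image (X Y : Type) (tX : fam X) (tY : fam Y) (f : X -> Y) (g : Y -> X) :
  compact X tX -> continuous_map X Y tX tY f -> (forall y, f (g y) = y) -> compact Y tY.
Proof.
  intros Hcomp Hf Hfg F HF Hcov.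
  destruct (Hcomp (fun W => exists V, F V /\ W = fun x => V (f x))) as (l & Hl & Hlcov).
  - intros W (V & HV & ->). apply Hf, HF, HV.
  - intro x. destruct (Hcov (f x)) as (V & HV & HVx). exists (fun x => V (f x)). eauto.
  - exists (map (fun W y => W (g y)) l). split.
    + intros U HU. apply in_map_iff in HU as (W & <- & HW).
      destruct (Hl W HW) as (V & HV & ->).
      replace (fun y => V (f (g y))) with V; [exact HV|].
      apply functional_extensionality. intro y. rewrite Hfg. reflexivity.
    + intro y. destruct (Hlcov (g y)) as (W & HW & HWy).
      exists (fun y => W (g y)). split; [|exact HWy].
      apply (in_map (fun W y => W (g y))), HW.
Qed.

Section Topology.
Variables (X : Type) (tau : fam X).

Definition isolated (x : X) : Prop := tau (fun z => z = x).

Lemma open_ext U V : tau U -> (forall x, U x <-> V x) -> tau V.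
Proof.
  intros HU HUV. replace V with U; [exact HU|].
  apply functional_extensionality. intro x. apply propositional_extensionality, HUV.
Qed.

Lemma compact_CLP_compact : compact X tau -> CLP_compact X tau.
Proof. intros Hcomp F HF. apply Hcomp. intros U HU. apply HF, HU. Qed.

Lemma cover_finite_set (F : fam X) : covers X F -> forall c : list X,
  exists l, (forall W, In W l -> F W) /\ forall x, In x c -> exists W, In W l /\ W x.
Proof.
  intros Hcov c. induction c as [|a c (l & Hl & Hlc)].
  - exists []. split; intros ? [].
  - destruct (Hcov a) as (W & HW & HWa). exists (W :: l). split.
    + intros U [<-|HU]; auto.
    + intros x [<-|Hx].
      * exists W. split; [left|]; auto.
      * destruct (Hlc x Hx) as (W' & HW' & HW'x). exists W'. split; [right|]; auto.
Qed.

Lemma singletons_in_list (l : list (X -> Prop)) :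
  exists c, forall x, In (fun z => z = x) l -> In x c.
Proof.
  induction l as [|W l (c & Hc)].
  - exists []. intros x [].
  - destruct (classic (exists y, W = fun z => z = y)) as [(y & ->)|HW].
    + exists (y :: c). intros x [Hyx|Hx]; [left|right; auto].
      pose proof (f_equal (fun P => P y) Hyx) as Hy. cbn in Hy. rewrite <- Hy. reflexivity.
    + exists c. intros x [HWx|Hx]; [|auto]. exfalso. apply HW. eauto.
Qed.

Hypothesis Htop : is_topology X tau.
Hypothesis Hhaus : hausdorff X tau.

Lemma open_inter U V : tau U -> tau V -> tau (fun x => U x /\ V x).
Proof. destruct Htop as (_ & _ & Hinter & _). apply Hinter. Qed.

Lemma open_of_local V :
  (forall x, V x -> exists U, tau U /\ U x /\ forall y, U y -> V y) -> tau V.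
Proof.
  intros Hloc. destruct Htop as (_ & _ & _ & Hunion).
  apply open_ext with (fun x => exists U, (tau U /\ forall y, U y -> V y) /\ U x).
  - apply Hunion. intros U [HU _]. exact HU.
  - intro x. split.
    + intros (U & (_ & HUV) & HUx). auto.
    + intros HVx. destruct (Hloc x HVx) as (U & HU & HUx & HUV). eauto.
Qed.

Lemma open_neq x : tau (fun z => z <> x).
Proof.
  apply open_of_local. intros z Hzx.
  destruct (Hhaus z x Hzx) as (U & V & HU & _ & HUz & HVx & Hdisj).
  exists U. split; [|split]; [assumption..|].
  intros y HUy ->. exact (Hdisj x (conj HUy HVx)).
Qed.

Lemma open_moved f : (forall V, tau V -> tau (fun x => V (f x))) -> tau (fun z => f z <> z).
Proof.
  intros Hf. apply open_of_local. intros z Hz.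
  destruct (Hhaus _ _ Hz) as (U & V & HU & HV & HUz & HVz & Hdisj).
  exists (fun w => U (f w) /\ V w). split; [apply open_inter; auto|]. split; [auto|].
  intros w [HUw HVw] Heq. rewrite Heq in HUw. exact (Hdisj w (conj HUw HVw)).
Qed.

Lemma open_avoiding x (L : list X) :
  tau (fun z => forall y, In y L -> y <> x -> z <> y).
Proof.
  induction L as [|y L IH].
  - destruct Htop as (_ & Hfull & _). apply open_ext with (1 := Hfull).
    intro z. split; [intros _ y []|trivial].
  - destruct (classic (y = x)) as [->|Hyx].
    + apply open_ext with (1 := IH). intro z. split.
      * intros Havoid y [<-|Hy] Hyx; [contradiction|]. auto.
      * intros Havoid y Hy. apply Havoid. right. exact Hy.
    + apply open_ext with (fun z => z <> y /\ forall y', In y' L -> y' <> x -> z <> y').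
      * apply open_inter; [apply open_neq|exact IH].
      * intro z. split.
        -- intros [Hzy Havoid] y' [<-|Hy']; auto.
        -- intros Havoid. split; [apply Havoid; [left|]|intros; apply Havoid; [right|]]; auto.
Qed.

Lemma isolated_of_finite_nbhd O x (L : list X) :
  tau O -> O x -> (forall z, O z -> In z L) -> isolated x.
Proof.
  intros HO HOx HOL.
  apply open_ext with (fun z => O z /\ forall y, In y L -> y <> x -> z <> y).
  - apply open_inter; [exact HO|apply open_avoiding].
  - intro z. split.
    + intros [HOz Havoid]. apply NNPP. intro Hzx. exact (Havoid z (HOL z HOz) Hzx eq_refl).
    + intros ->. split; [exact HOx|]. intros y _ Hyx Hxy. exact (Hyx (eq_sym Hxy)).
Qed.

Section CofiniteNeighbourhoods.
Variable p : X.

Definition cofinite_nbhds : Prop :=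
  forall U, tau U -> U p -> finite_set X (fun x => ~ U x).

Lemma cofinite_nbhds_compact : cofinite_nbhds -> compact X tau.
Proof.
  intros Hcof F HF Hcov. destruct (Hcov p) as (U & HU & HUp).
  destruct (Hcof U (HF U HU) HUp) as (c & Hc).
  destruct (cover_finite_set F Hcov c) as (l & Hl & Hlc).
  exists (U :: l). split.
  - intros W [<-|HW]; auto.
  - intro x. destruct (classic (U x)) as [HUx|HUx].
    + exists U. split; [left|]; auto.
    + destruct (Hlc x (Hc x HUx)) as (W & HW & HWx). exists W. split; [right|]; auto.
Qed.

Lemma cofinite_nbhds_countably_compact : cofinite_nbhds -> countably_compact X tau.
Proof.
  intros Hcof A HA. exists p. intros U HU HUp. apply NNPP. intro Hnone. apply HA.
  destruct (Hcof U HU HUp) as (c & Hc). exists (p :: c). intros y Hy.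
  destruct (classic (y = p)) as [->|Hyp]; [left; reflexivity|].
  right. apply Hc. intro HUy. apply Hnone. exists y. auto.
Qed.

Lemma cofinite_nbhds_feebly_compact : cofinite_nbhds -> feebly_compact X tau.
Proof.
  intros Hcof F HF Hlf.
  assert (Hat : forall x, exists l, forall V, F V -> V x -> In V l).
  { intro x. destruct (Hlf x) as (W & _ & HWx & l & Hl). exists l.
    intros V HV HVx. apply Hl. split; [|exists x]; auto. }
  assert (Hlist : forall c : list X, exists L, forall x V, In x c -> F V -> V x -> In V L).
  { induction c as [|a c (L & HL)].
    - exists []. intros x V [].
    - destruct (Hat a) as (la & Hla). exists (la ++ L).
      intros x V [<-|Hx] HV HVx; apply in_or_app; [left|right]; eauto. }
  destruct (Hlf p) as (W & HW & HWp & l & Hl).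
  destruct (Hcof W HW HWp) as (c & Hc). destruct (Hlist c) as (L & HL).
  exists (l ++ L). intros V HV. destruct (HF V HV) as (_ & y & Hy). apply in_or_app.
  destruct (classic (W y)) as [HWy|HWy].
  - left. apply Hl. split; [|exists y]; auto.
  - right. apply (HL y V); auto.
Qed.

Hypothesis Hisolated : forall x, x <> p -> isolated x.

Lemma open_of_cofinite V : (V p -> finite_set X (fun x => ~ V x)) -> tau V.
Proof.
  intros Hcof. apply open_of_local. intros x HVx.
  destruct (classic (x = p)) as [->|Hxp].
  - destruct (Hcof HVx) as (c & Hc).
    exists (fun z => forall y, In y c -> y <> p -> z <> y).
    split; [apply open_avoiding|]. split.
    + intros y _ Hyp Hpy. exact (Hyp (eq_sym Hpy)).
    + intros z Havoid. apply NNPP. intro HVz.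
      apply (Havoid z (Hc z HVz)); [intros ->; contradiction|reflexivity].
  - exists (fun z => z = x). split; [apply Hisolated, Hxp|]. split; [reflexivity|].
    intros y ->. exact HVx.
Qed.

Lemma CLP_compact_cofinite_nbhds : CLP_compact X tau -> cofinite_nbhds.
Proof.
  intros Hclp U HU HUp.
  destruct (Hclp (fun W => W = U \/ exists x, ~ U x /\ W = fun z => z = x))
    as (l & Hl & Hlcov).
  - intros W [->|(x & HUx & ->)]; split.
    + exact HU.
    + apply open_of_local. intros x HUx. exists (fun z => z = x).
      split; [apply Hisolated; intros ->; contradiction|]. split; [reflexivity|].
      intros y ->. exact HUx.
    + apply Hisolated. intros ->. contradiction.
    + apply open_neq.
  - intro x. destruct (classic (U x)) as [HUx|HUx].
    + exists U. auto.
    + exists (fun z => z = x). split; [right; eauto|reflexivity].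
  - destruct (singletons_in_list l) as (c & Hc). exists c. intros x HUx. apply Hc.
    destruct (Hlcov x) as (W & HWl & HWx).
    destruct (Hl W HWl) as [->|(y & _ & ->)]; [contradiction|].
    subst. exact HWl.
Qed.

Lemma countably_compact_cofinite_nbhds : countably_compact X tau -> cofinite_nbhds.
Proof.
  intros Hcc U HU HUp. apply NNPP. intro Hinf. destruct (Hcc _ Hinf) as (x & Hx).
  destruct (classic (x = p)) as [->|Hxp].
  - destruct (Hx U HU HUp) as (y & HUy & _ & HUy'). contradiction.
  - destruct (Hx _ (Hisolated x Hxp) eq_refl) as (y & _ & Hyx & Hyx'). contradiction.
Qed.

Lemma feebly_compact_cofinite_nbhds : feebly_compact X tau -> cofinite_nbhds.
Proof.
  intros Hfc U HU HUp.
  destruct (Hfc (fun W => exists x, ~ U x /\ W = fun z => z = x)) as (l & Hl).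
  - intros W (x & HUx & ->). split; [|exists x; reflexivity].
    apply Hisolated. intros ->. contradiction.
  - intro z. destruct (classic (z = p)) as [->|Hzp].
    + exists U. split; [exact HU|]. split; [exact HUp|]. exists [].
      intros V ((x & HUx & ->) & y & HUy & ->). contradiction.
    + exists (fun w => w = z). split; [apply Hisolated, Hzp|]. split; [reflexivity|].
      exists [fun w => w = z]. intros V ((x & _ & ->) & y & -> & ->). left. reflexivity.
  - destruct (singletons_in_list l) as (c & Hc). exists c. intros x HUx.
    apply Hc, Hl. eauto.
Qed.

End CofiniteNeighbourhoods.
End Topology.

Section GraphInverseSemigroup.
Variable E : graph.

Local Notation elt u w H := (Some (exist _ (u, w) H) : GE E).

Definition extends (c b : path E) (q : list (edge E)) : Prop :=
  fst c = fst b /\ snd c = snd b ++ q.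

Definition comparable (b c : path E) : Prop :=
  (exists q, extends c b q) \/ (exists q, extends b c q).

Lemma extends_pcat p q : extends (pcat E p q) p q.
Proof. split; reflexivity. Qed.

Lemma extends_eq_pcat c b q : extends c b q -> c = pcat E b q.
Proof. destruct c, b. intros [Hfst Hsnd]. cbn in *. subst. reflexivity. Qed.

Lemma pcat_nil p : pcat E p [] = p.
Proof. destruct p. unfold pcat. cbn. rewrite app_nil_r. reflexivity. Qed.

Lemma extends_refl p : extends p p [].
Proof. split; [reflexivity|]. rewrite app_nil_r. reflexivity. Qed.

Lemma comparable_sym b c : comparable b c -> comparable c b.
Proof. intros [H|H]; [right|left]; exact H. Qed.

Lemma comparable_fst b c : comparable b c -> fst b = fst c.
Proof. intros [(q & Hq & _)|(q & Hq & _)]; congruence. Qed.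

Lemma pref_spec b c q : pref E b c = Some q -> extends c b q.
Proof.
  unfold pref. destruct (excluded_middle_informative _) as [H|H]; [|discriminate].
  intros Heq. injection Heq as <-.
  exact (proj2_sig (constructive_indefinite_description _ H)).
Qed.

Lemma pref_of_extends b c q : extends c b q -> pref E b c = Some q.
Proof.
  intros Hq. unfold pref. destruct (excluded_middle_informative _) as [H|H].
  - f_equal. destruct (proj2_sig (constructive_indefinite_description _ H)) as [_ Hq'].
    apply (app_inv_head (snd b)). rewrite <- Hq'. apply Hq.
  - exfalso. apply H. exists q. exact Hq.
Qed.

Lemma mkGE_spec u w r : mkGE E u w = Some r -> proj1_sig r = (u, w).
Proof.
  unfold mkGE. destruct (excluded_middle_informative _); [|discriminate].
  intros Heq. injection Heq as <-. reflexivity.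
Qed.

Lemma mkGE_valid u w (H : GE_valid E (u, w)) : mkGE E u w = elt u w H.
Proof.
  unfold mkGE. destruct (excluded_middle_informative _) as [H'|]; [|contradiction].
  rewrite (proof_irrelevance _ H' H). reflexivity.
Qed.

Lemma elt_inj u w u' w' H H' : elt u w H = elt u' w' H' -> (u, w) = (u', w').
Proof.
  intros Heq.
  exact (f_equal (fun o : GE E => match o with Some s => proj1_sig s | None => (u, w) end) Heq).
Qed.

Lemma vert_valid v : GE_valid E ((v, []), (v, [])).
Proof. repeat split. Qed.

Lemma GE_vert_elt v : GE_vert E v = elt (v, []) (v, []) (vert_valid v).
Proof. apply mkGE_valid. Qed.

Lemma GE_mul_elt a b c d Hx Hy :
  GE_mul E (elt a b Hx) (elt c d Hy) =
  match pref E b c with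
  | Some q => mkGE E (pcat E a q) d
  | None => match pref E c b with
            | Some q => mkGE E a (pcat E d q)
            | None => None
            end
  end.
Proof. reflexivity. Qed.

Lemma GE_mul_extends a b c d Hx Hy q : extends c b q ->
  GE_mul E (elt a b Hx) (elt c d Hy) = mkGE E (pcat E a q) d.
Proof. intros Hq. rewrite GE_mul_elt, (pref_of_extends _ _ _ Hq). reflexivity. Qed.

(* The extension must be proper: if b = c then the first clause of [GE_mul] applies. *)
Lemma GE_mul_extended a b c d Hx Hy e q : extends b c (e :: q) ->
  GE_mul E (elt a b Hx) (elt c d Hy) = mkGE E a (pcat E d (e :: q)).
Proof.
  intros Hq. rewrite GE_mul_elt. destruct (pref E b c) as [l|] eqn:Hbc.
  - exfalso. destruct (pref_spec _ _ _ Hbc) as [_ Hc], Hq as [_ Hb].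
    rewrite Hb in Hc. apply (f_equal (@length _)) in Hc.
    rewrite !length_app in Hc. cbn in Hc. lia.
  - rewrite (pref_of_extends _ _ _ Hq). reflexivity.
Qed.

Lemma GE_mul_cancel u a w H1 H2 : GE_mul E (elt u a H1) (elt a w H2) = mkGE E u w.
Proof. rewrite (GE_mul_extends _ _ _ _ _ _ _ (extends_refl a)), pcat_nil. reflexivity. Qed.

Lemma GE_mul_cases a b c d Hx Hy r :
  GE_mul E (elt a b Hx) (elt c d Hy) = Some r ->
  (exists q, extends c b q /\ proj1_sig r = (pcat E a q, d)) \/
  (exists q, extends b c q /\ proj1_sig r = (a, pcat E d q)).
Proof.
  rewrite GE_mul_elt. destruct (pref E b c) as [q|] eqn:Hbc.
  - intros Hr. left. exists q. split; [apply pref_spec|apply mkGE_spec]; assumption.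
  - destruct (pref E c b) as [q|] eqn:Hcb; [|discriminate].
    intros Hr. right. exists q. split; [apply pref_spec|apply mkGE_spec]; assumption.
Qed.

Lemma GE_mul_nonzero a b c d Hx Hy :
  GE_mul E (elt a b Hx) (elt c d Hy) <> GE_zero E -> comparable b c.
Proof.
  destruct (GE_mul E _ _) as [r|] eqn:Hr; [intros _|contradiction].
  destruct (GE_mul_cases _ _ _ _ _ _ _ Hr) as [(q & Hq & _)|(q & Hq & _)];
    [left|right]; exists q; exact Hq.
Qed.

Lemma GE_mul_idem_r a b c Hx Hc t : extends b c t ->
  GE_mul E (elt a b Hx) (elt c c Hc) = elt a b Hx.
Proof.
  intros Ht. pose proof (extends_eq_pcat _ _ _ Ht) as Hb. destruct t as [|e t].
  - rewrite pcat_nil in Hb. subst b.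
    rewrite GE_mul_cancel. apply mkGE_valid.
  - rewrite (GE_mul_extended _ _ _ _ _ _ _ _ Ht), <- Hb. apply mkGE_valid.
Qed.

Lemma GE_mul_idem_l a b c Hx Hc t : extends a c t ->
  GE_mul E (elt c c Hc) (elt a b Hx) = elt a b Hx.
Proof.
  intros Ht. rewrite (GE_mul_extends _ _ _ _ _ _ _ Ht), <- (extends_eq_pcat _ _ _ Ht).
  apply mkGE_valid.
Qed.

Lemma GE_mul_eq_vert p q r s Hx Hy w :
  GE_mul E (elt p q Hx) (elt r s Hy) = GE_vert E w -> q = r /\ p = (w, []) /\ s = (w, []).
Proof.
  rewrite GE_vert_elt. intros Hprod.
  destruct (GE_mul_cases _ _ _ _ _ _ _ Hprod) as [(t & Ht & Hr)|(t & Ht & Hr)];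
    apply extends_eq_pcat in Ht; destruct p as [p0 p1], s as [s0 s1];
    cbn in Hr; injection Hr; intros; subst;
    match goal with H : [] = _ ++ t |- _ => symmetry in H; apply app_eq_nil in H as [-> ->] end;
    rewrite pcat_nil; auto.
Qed.

Lemma sandwich_vert_prefixes u a b u' c d Ha Hb Hz w :
  GE_mul E (GE_mul E (elt u a Ha) (elt c d Hz)) (elt b u' Hb) = GE_vert E w ->
  (exists t, extends a c t) /\ (exists t, extends b d t).
Proof.
  intros Hprod. destruct (GE_mul E (elt u a Ha) (elt c d Hz)) as [[[p q] Hy]|] eqn:Hleft.
  2: { rewrite GE_vert_elt in Hprod. discriminate. }
  destruct (GE_mul_eq_vert _ _ _ _ _ _ _ Hprod) as (<- & -> & _).
  destruct (GE_mul_cases _ _ _ _ _ _ _ Hleft) as [(t & Ht & Hr)|(t & Ht & Hr)];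
    cbn in Hr; apply pair_equal_spec in Hr as [Hp Hq].
  - destruct u as [u0 u1]. unfold pcat in Hp. cbn in Hp. injection Hp as _ Ht'.
    symmetry in Ht'. apply app_eq_nil in Ht' as [_ ->]. apply extends_eq_pcat in Ht.
    rewrite pcat_nil in Ht. subst. split; exists []; apply extends_refl.
  - split; exists t; [exact Ht|]. rewrite Hq. apply extends_pcat.
Qed.

Lemma comparable_edge_path v e p :
  comparable (v, [e]) p -> ~ (exists q, extends p (v, [e]) q) -> p = (v, []).
Proof.
  intros [Hext|(q & Hfst & Hsnd)] Hnot; [contradiction|].
  destruct p as [p0 [|e' p1]]; cbn in Hfst, Hsnd; subst; [reflexivity|].
  injection Hsnd as -> Hnil. symmetry in Hnil. apply app_eq_nil in Hnil as [-> _].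
  exfalso. apply Hnot. exists []. apply extends_refl.
Qed.

Lemma valid_path_sink p : valid_path E p -> (forall e, src E e <> fst p) -> snd p = [].
Proof.
  destruct p as [p0 [|e l]]; [reflexivity|]. intros [Hsrc _] Hsink.
  exfalso. exact (Hsink e Hsrc).
Qed.

Definition path_prefixes (p : path E) : list (path E) :=
  map (pair (fst p)) (prefixes (snd p)).

Lemma extends_in_path_prefixes p c t : extends p c t -> In c (path_prefixes p).
Proof.
  destruct p, c. intros [Hfst Hsnd]. cbn in *. subst. apply in_map, in_prefixes.
Qed.

Section Semitopological.
Variable tau : fam (GE E).
Hypothesis Htop : is_topology (GE E) tau.
Hypothesis Hhaus : hausdorff (GE E) tau.
Hypothesis Hsemi : semitopological (GE E) (GE_mul E) tau.

Lemma open_mul_l y V : tau V -> tau (fun z => V (GE_mul E y z)).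
Proof. apply (proj1 (Hsemi y)). Qed.

Lemma open_mul_r y V : tau V -> tau (fun z => V (GE_mul E z y)).
Proof. apply (proj2 (Hsemi y)). Qed.

Lemma open_mul_l_nonzero y : tau (fun z => GE_mul E y z <> GE_zero E).
Proof. apply (open_mul_l y (fun w => w <> GE_zero E)), (open_neq _ _ Htop Hhaus). Qed.

Lemma open_mul_r_nonzero y : tau (fun z => GE_mul E z y <> GE_zero E).
Proof. apply (open_mul_r y (fun w => w <> GE_zero E)), (open_neq _ _ Htop Hhaus). Qed.

Lemma open_mul_l_moved y : tau (fun z => GE_mul E y z <> z).
Proof. apply (open_moved _ _ Htop Hhaus). intros V. apply open_mul_l. Qed.

Lemma open_mul_r_moved y : tau (fun z => GE_mul E z y <> z).
Proof. apply (open_moved _ _ Htop Hhaus). intros V. apply open_mul_r. Qed.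

Lemma vertex_isolated_sink v : (forall e, src E e <> v) -> isolated (GE E) tau (GE_vert E v).
Proof.
  intros Hsink. rewrite GE_vert_elt.
  set (xv := elt (v, []) (v, []) (vert_valid v)).
  apply (isolated_of_finite_nbhd _ _ Htop Hhaus
           (fun z => GE_mul E xv z <> GE_zero E /\ GE_mul E z xv <> GE_zero E) _ [xv]).
  - apply (open_inter _ _ Htop); [apply open_mul_l_nonzero|apply open_mul_r_nonzero].
  - unfold xv. rewrite GE_mul_cancel, mkGE_valid with (H := vert_valid v).
    split; discriminate.
  - intros [[[c d] Hz]|] [Hl Hr]; [|contradiction].
    unfold xv in Hl, Hr. apply GE_mul_nonzero, comparable_fst in Hl, Hr. cbn in Hl, Hr.
    pose proof Hz as (Hc & Hd & _).
    assert (Hc1 : snd c = []) by (apply valid_path_sink; [exact Hc|rewrite <- Hl; exact Hsink]).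
    assert (Hd1 : snd d = []) by (apply valid_path_sink; [exact Hd|rewrite Hr; exact Hsink]).
    left. unfold xv. rewrite <- !mkGE_valid.
    destruct c, d. cbn in *. subst. reflexivity.
Qed.

Lemma vertex_isolated_source v e : src E e = v -> isolated (GE E) tau (GE_vert E v).
Proof.
  intros He.
  assert (Hee : GE_valid E ((v, [e]), (v, [e]))) by (repeat split; exact He).
  set (ee := elt (v, [e]) (v, [e]) Hee).
  apply (isolated_of_finite_nbhd _ _ Htop Hhaus
           (fun z => (GE_mul E z ee <> GE_zero E /\ GE_mul E ee z <> GE_zero E) /\
                     (GE_mul E z ee <> z /\ GE_mul E ee z <> z)) _ [GE_vert E v]).
  - repeat apply (open_inter _ _ Htop).
    + apply open_mul_r_nonzero.
    + apply open_mul_l_nonzero.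
    + apply open_mul_r_moved.
    + apply open_mul_l_moved.
  - assert (Hee_v : ee <> GE_vert E v).
    { rewrite GE_vert_elt. intros Heq. apply elt_inj in Heq. discriminate. }
    rewrite GE_vert_elt in *. unfold ee.
    rewrite (GE_mul_idem_l _ _ _ _ _ [e]), (GE_mul_idem_r _ _ _ _ _ [e]) by (split; reflexivity).
    split; split; [discriminate|discriminate|exact Hee_v|exact Hee_v].
  - intros [[[c d] Hz]|] [[Hr Hl] [Hr' Hl']]; [|contradiction].
    unfold ee in Hr, Hl. apply GE_mul_nonzero in Hr, Hl.
    assert (Hd : d = (v, [])).
    { apply (comparable_edge_path v e); [apply comparable_sym, Hr|].
      intros (t & Ht). exact (Hr' (GE_mul_idem_r _ _ _ _ _ _ Ht)). }
    assert (Hc : c = (v, [])).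
    { apply (comparable_edge_path v e); [exact Hl|].
      intros (t & Ht). exact (Hl' (GE_mul_idem_l _ _ _ _ _ _ Ht)). }
    subst. left. rewrite GE_vert_elt, <- !mkGE_valid. reflexivity.
Qed.

Lemma vertex_isolated v : isolated (GE E) tau (GE_vert E v).
Proof.
  destruct (classic (exists e, src E e = v)) as [(e & He)|Hsink].
  - exact (vertex_isolated_source v e He).
  - apply vertex_isolated_sink. intros e He. apply Hsink. exists e. exact He.
Qed.

Lemma nonzero_isolated x : x <> GE_zero E -> isolated (GE E) tau x.
Proof.
  destruct x as [[[a b] Hx]|]; [intros _|intros []; reflexivity].
  pose proof Hx as (Hva & Hvb & Hrange).
  set (v := prange E a).
  assert (Hai : GE_valid E ((v, []), a)) by (repeat split; exact Hva).
  assert (Hbi : GE_valid E (b, (v, []))) by (repeat split; [exact Hvb|exact (eq_sym Hrange)]).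
  assert (Hrb : GE_valid E ((v, []), b)) by (repeat split; [exact Hvb|exact Hrange]).
  apply (isolated_of_finite_nbhd _ _ Htop Hhaus
    (fun z => GE_mul E (GE_mul E (elt (v, []) a Hai) z) (elt b (v, []) Hbi) = GE_vert E v) _
    (map (fun cd => mkGE E (fst cd) (snd cd)) (list_prod (path_prefixes a) (path_prefixes b)))).
  - exact (open_mul_l _ _ (open_mul_r _ _ (vertex_isolated v))).
  - rewrite GE_mul_cancel, (mkGE_valid _ _ Hrb), GE_mul_cancel. reflexivity.
  - intros [[[c d] Hz]|] Hprod.
    2: { rewrite GE_vert_elt in Hprod. discriminate. }
    destruct (sandwich_vert_prefixes _ _ _ _ _ _ _ _ _ _ Hprod) as ((t & Ht) & (t' & Ht')).
    apply in_map_iff. exists (c, d). split; [apply mkGE_valid|].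
    apply in_prod;
      [exact (extends_in_path_prefixes _ _ _ Ht)|exact (extends_in_path_prefixes _ _ _ Ht')].
Qed.

End Semitopological.

Lemma tau_c_cofinite_nbhds : cofinite_nbhds (GE E) (tau_c E) (GE_zero E).
Proof. intros U HU HU0. exact (HU HU0). Qed.

Lemma top_iso_compact tau : top_iso E tau (tau_c E) -> compact (GE E) tau.
Proof.
  intros (h & g & Hgh & _ & _ & _ & Hg).
  apply (compact_image _ _ (tau_c E) tau g h); [|exact Hg|exact Hgh].
  exact (cofinite_nbhds_compact _ _ _ tau_c_cofinite_nbhds).
Qed.

Lemma cofinite_nbhds_top_iso tau :
  is_topology (GE E) tau -> hausdorff (GE E) tau ->
  (forall x, x <> GE_zero E -> isolated (GE E) tau x) ->
  cofinite_nbhds (GE E) tau (GE_zero E) -> top_iso E tau (tau_c E).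
Proof.
  intros Htop Hhaus Hiso Hcof. exists (fun x => x), (fun x => x).
  split; [reflexivity|]. split; [reflexivity|]. split; [reflexivity|]. split.
  - intros V HV. exact (open_of_cofinite _ _ Htop Hhaus _ Hiso V HV).
  - intros V HV HV0. exact (Hcof V HV HV0).
Qed.

End GraphInverseSemigroup.

Theorem corollary2p2 (E : graph) (tau : fam (GE E)) :
  is_topology (GE E) tau -> hausdorff (GE E) tau -> semitopological (GE E) (GE_mul E) tau ->
  (compact (GE E) tau <-> countably_compact (GE E) tau) /\
  (compact (GE E) tau <-> feebly_compact (GE E) tau) /\
  (compact (GE E) tau <-> CLP_compact (GE E) tau) /\
  (compact (GE E) tau <-> top_iso E tau (tau_c E)).
Proof.
  intros Htop Hhaus Hsemi.
  pose proof (nonzero_isolated E tau Htop Hhaus Hsemi) as Hiso.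
  pose proof (cofinite_nbhds_compact _ tau (GE_zero E)).
  pose proof (cofinite_nbhds_countably_compact _ tau (GE_zero E)).
  pose proof (cofinite_nbhds_feebly_compact _ tau (GE_zero E)).
  pose proof (cofinite_nbhds_top_iso E tau Htop Hhaus Hiso).
  pose proof (compact_CLP_compact _ tau).
  pose proof (CLP_compact_cofinite_nbhds _ tau Htop Hhaus _ Hiso).
  pose proof (countably_compact_cofinite_nbhds _ tau _ Hiso).
  pose proof (feebly_compact_cofinite_nbhds _ tau _ Hiso).
  pose proof (top_iso_compact E tau).
  tauto.
Qed.
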